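(* Let $G=\langle A\cup B\rangle$ be a CS group with periodic rooted group $A$ such that either (i) $A$ has finite exponent, or (ii) the directed group $B$ has finite support. Let $S$ be a generating set of $B$. If the atomic dynamical system $\Sigma_S$ on $\mathcal P(A)$ is eventually trivial, then $G$ is periodic.
   Context: Let $X$ be a nonempty set (possibly infinite) with distinguished letter $0$, $\dot X=X\setminus\{0\}$. $X^*$ is the free monoid on $X$ viewed as a rooted tree; $\mathrm{Aut}(X^* )$ is the group of root-fixing tree automorphisms acting on the right ($gh$ = first $g$ then $h$); sections $g|_u$ are defined by $(u\star v).g=u.g\star v.(g|_u)$; elements of $\mathrm{Sym}(X)$ are identified with rooted automorphisms $(x\star v).\rho=x.\rho\star v$; $\mathrm{St}(1)$ is the first layer stabiliser. A constant spinal (CS) group is $G=\langle A\cup B\rangle$ with $A\le\mathrm{Sym}(X)$ transitive (rooted group) and $B\le\mathrm{St}(1)$ (directed group) such that $b|_0=b$ for all $b\in B$ and the elements $b|_x$ ($b\in B$, $x\in\dot X$) lie in $A$ and generate $A$. $B$ has finite support if each $b\in B$ has $b|_x=\mathrm{id}$ for all but finitely many $x$. A group is periodic if every element has finite order. Notation: $\mathrm{orb}_c(0)$ is the $\langle c\rangle$-orbit of $0$ and $\ell_c(0)$ its length. For $x\in X$ let $\mathrm{mp}_A(0,x)=\{c\in A:0.c=x\}$. For $a\in A$, $x\in X$: $\mathfrak C(a,x)=\{cac^{-1}:c\in\mathrm{mp}_A(0,x)\}$ and $\mathfrak X(a,x)=\bigcup_{c\in\mathfrak C(a,x)}\mathrm{orb}_c(0)\setminus\{0\}$.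 For $S\subseteq B$ put $H_S(a,x)=\langle b|_y: y\in\mathfrak X(a,x),\ b\in S\rangle\le A$ and define $\sigma_S(a,x)=\big\langle\, b|_{0.c}\,b|_{0.c^2}\cdots b|_{0.c^{\ell_c(0)-1}} : c\in\mathfrak C(a,x),\ b\in S\,\big\rangle\cdot H_S(a,x)'\subseteq A$, where $H_S(a,x)'$ is the derived subgroup (the set does not depend on the order of the factors in the products). $\Sigma_S:\mathcal P(A)\to\mathcal P(A)$ is the atomic map $\Sigma_S(P)=\bigcup_{a\in P}\bigcup_{x\in X}\sigma_S(a,x)$. It is eventually trivial if for every $a\in A$ there is $n$ with $\Sigma_S^m(\{a\})\subseteq\{1_A\}$ for all $m>n$. *)

(* Words are lists (first letter = letter nearest the root).
   Tree automorphisms are modelled as functions  list X -> list X ;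
   w.g := g w  (right action), so the product gh ("first g then h")
   is the function  fun w => h (g w). *)
From Stdlib Require Import List Arith.
Import ListNotations.
Set Implicit Arguments.

Section CS.
Variable X : Type.
Variable x0 : X.

Inductive gen_group (T : Type) (S : (T -> T) -> Prop) : (T -> T) -> Prop :=
| gg_id : gen_group S (fun t => t)
| gg_gen s : S s -> gen_group S s
| gg_mul g h : gen_group S g -> gen_group S h -> gen_group S (fun t => h (g t))
| gg_inv g h : gen_group S g -> (forall t, h (g t) = t) ->
               (forall t, g (h t) = t) -> gen_group S h.

Definition is_subgroup (T : Type) (H : (T -> T) -> Prop) : Prop :=
  H (fun t => t) /\
  (forall g h, H g -> H h -> H (fun t => h (g t))) /\
  (forall g, H g -> exists h, H h /\ (forall t, h (g t) = t) /\ (forall t, g (h t) = t)).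

Definition is_bijection (T : Type) (f : T -> T) : Prop :=
  exists h : T -> T, (forall t, h (f t) = t) /\ (forall t, f (h t) = t).

Definition is_tree_aut (g : list X -> list X) : Prop :=
  is_bijection g /\ g [] = [] /\
  (forall w x, exists y, g (w ++ [x]) = g w ++ [y]).

(* section g|_u :  (u v).g = (u.g)(v.(g|_u)) *)
Definition section (g : list X -> list X) (u : list X) : list X -> list X :=
  fun v => skipn (length u) (g (u ++ v)).

Definition rooted (rho : X -> X) : list X -> list X :=
  fun w => match w with [] => [] | x :: v => rho x :: v end.

(* the permutation of X induced on the first level below x by g (i.e. the
   label of g|_x when g|_x is rooted) *)
Definition secA (g : list X -> list X) (x : X) : X -> X :=
  fun y => match g [x; y] with _ :: z :: _ => z | _ => y end.

Definition in_St1 (g : list X -> list X) : Prop := forall x, g [x] = [x].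

Definition is_CS (A : (X -> X) -> Prop) (B : (list X -> list X) -> Prop) : Prop :=
  (forall a, A a -> is_bijection a) /\ is_subgroup A /\
  (forall x y, exists a, A a /\ a x = y) /\
  (forall b, B b -> is_tree_aut b /\ in_St1 b) /\ is_subgroup B /\
  (forall b, B b -> forall v, section b [x0] v = b v) /\
  (forall b x, B b -> x <> x0 ->
      A (secA b x) /\ forall v, section b [x] v = rooted (secA b x) v) /\
  (forall a, A a <-> gen_group (fun f => exists b x, B b /\ x <> x0 /\ f = secA b x) a).

Definition CS_group (A : (X -> X) -> Prop) (B : (list X -> list X) -> Prop)
  : (list X -> list X) -> Prop :=
  gen_group (fun g => (exists a, A a /\ g = rooted a) \/ B g).

Definition periodic (T : Type) (G : (T -> T) -> Prop) : Prop :=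
  forall g, G g -> exists n, 0 < n /\ forall t, Nat.iter n g t = t.

Definition finite_exponent (A : (X -> X) -> Prop) : Prop :=
  exists n, 0 < n /\ forall a, A a -> forall t, Nat.iter n a t = t.

Definition finite_support (B : (list X -> list X) -> Prop) : Prop :=
  forall b, B b -> exists F : list X,
    forall x, ~ In x F -> forall v, section b [x] v = v.

Definition generates (S B : (list X -> list X) -> Prop) : Prop :=
  (forall b, S b -> B b) /\ (forall g, B g <-> gen_group S g).

(* product f_1 f_2 ... f_n  (first f_1, then f_2, ...) *)
Definition prod_list (fs : list (X -> X)) : X -> X :=
  fold_left (fun acc f => fun y => f (acc y)) fs (fun y => y).

Section Sigma.
Variable A : (X -> X) -> Prop.
Variable S : (list X -> list X) -> Prop.

(* C(a,x) = { c a c^{-1} : c in A, 0.c = x } *)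
Definition Cset (a : X -> X) (x : X) (d : X -> X) : Prop :=
  exists c ci, A c /\ c x0 = x /\ A ci /\
    (forall y, ci (c y) = y) /\ (forall y, c (ci y) = y) /\
    (forall y, d y = ci (a (c y))).

Definition Xset (a : X -> X) (x : X) (y : X) : Prop :=
  exists c k, Cset a x c /\ Nat.iter k c x0 = y /\ y <> x0.

Definition Hgroup (a : X -> X) (x : X) : (X -> X) -> Prop :=
  gen_group (fun f => exists b y, S b /\ Xset a x y /\ f = secA b y).

Definition derived (H : (X -> X) -> Prop) : (X -> X) -> Prop :=
  gen_group (fun f => exists g h gi hi, H g /\ H h /\
     (forall y, gi (g y) = y) /\ (forall y, g (gi y) = y) /\
     (forall y, hi (h y) = y) /\ (forall y, h (hi y) = y) /\
     (* [g,h] = g^{-1} h^{-1} g h *)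
     f = fun y => h (g (hi (gi y)))).

Definition sigma_gens (a : X -> X) (x : X) (f : X -> X) : Prop :=
  exists c b l, Cset a x c /\ S b /\
    0 < l /\ Nat.iter l c x0 = x0 /\
    (forall k, 0 < k < l -> Nat.iter k c x0 <> x0) /\
    f = prod_list (map (fun k => secA b (Nat.iter k c x0)) (seq 1 (l - 1))).

Definition sigma (a : X -> X) (x : X) (z : X -> X) : Prop :=
  exists p q, gen_group (sigma_gens a x) p /\ derived (Hgroup a x) q /\
    forall y, z y = q (p y).

Definition Sigma (P : (X -> X) -> Prop) : (X -> X) -> Prop :=
  fun z => exists a x, P a /\ sigma a x z.

Definition eventually_trivial : Prop :=
  forall a, A a -> exists n, forall m, n < m ->
    forall z, Nat.iter m Sigma (fun f => f = a) z -> forall y, z y = y.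

End Sigma.
End CS.

From Stdlib Require Import List Arith Lia Permutation.
From Stdlib Require Import FunctionalExtensionality Classical ClassicalEpsilon.
Import ListNotations.

(* An element g of G is a word in rooted letters from A and directed letters from S and their
   inverses; let a be its action on the first level. For a first-level vertex x whose a-orbit
   has length l, the section of g^l at x is again such a word: each directed letter b of g
   contributes one letter per point of the orbit, namely b itself where the orbit, moved by the
   permutation preceding b, passes through 0, and a rooted section of b elsewhere. An orbit
   passes through 0 at most once, so the section has at most as many directed letters as g,
   and if it has fewer we induct on their number. Otherwise every directed letter reappears
   exactly once, and the rooted part of the section is, modulo the derived subgroup of
   H_S(a,x), a product of generators of sigma_S(a,x) (the orbit is one of a conjugate of a
   through 0); we then induct on the time after which Sigma_S kills a. In the base case a = 1
   and the sections lie in B. Finally g has finite order once all these sections do, because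
   off finitely many vertices they are rooted with uniformly bounded exponent: the exponent of
   A in case (i), and trivial in case (ii). *)

Lemma flat_map_map (I J U : Type) (f : J -> list U) (g : I -> J) (l : list I) :
  flat_map f (map g l) = flat_map (fun i => f (g i)) l.
Proof. induction l; simpl; auto. now f_equal. Qed.

Lemma Forall2_map_pointwise (I U V : Type) (R : U -> V -> Prop) (f : I -> U) (g : I -> V)
  (l : list I) :
  (forall i, In i l -> R (f i) (g i)) -> Forall2 R (map f l) (map g l).
Proof. induction l; simpl; intros; constructor; auto. Qed.

Lemma flat_map_app_distr (I U : Type) (f g : I -> list U) (l : list I) :
  Permutation (flat_map f l ++ flat_map g l) (flat_map (fun i => f i ++ g i) l).
Proof.
  induction l as [|i l IH]; simpl; auto.
  rewrite <- !app_assoc. apply Permutation_app_head.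
  rewrite Permutation_app_swap_app. now apply Permutation_app_head.
Qed.

Lemma flat_map_exchange (I J U : Type) (F : I -> J -> list U) (li : list I) (lj : list J) :
  Permutation (flat_map (fun j => flat_map (fun i => F i j) li) lj)
              (flat_map (fun i => flat_map (fun j => F i j) lj) li).
Proof.
  induction lj as [|j lj IH]; simpl.
  - induction li; simpl; auto.
  - rewrite IH. apply flat_map_app_distr.
Qed.

Lemma map_seq_offset (U : Type) (h : nat -> U) (s n : nat) :
  map h (seq s n) = map (fun k => h (k + s)) (seq 0 n).
Proof.
  induction n as [|n IH]; auto.
  rewrite !seq_S, !map_app, IH. simpl. do 3 f_equal. lia.
Qed.

Lemma map_seq_rotate (U : Type) (h : nat -> U) (l j : nat) :
  j <= l -> (forall k, h (k + l) = h k) ->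
  Permutation (map h (seq 0 l)) (map (fun k => h (k + j)) (seq 0 l)).
Proof.
  intros Hj Hper.
  replace l with (j + (l - j)) at 1 by lia. replace l with ((l - j) + j) at 2 by lia.
  rewrite !seq_app, !map_app, Permutation_app_comm, !(map_seq_offset _ _ (0 + _)).
  apply Permutation_app; apply Permutation_refl'; apply map_ext; intros k; simpl.
  - reflexivity.
  - rewrite <- Hper. f_equal. lia.
Qed.

Lemma list_sum_le_length (T : Type) (f : T -> nat) (l : list T) :
  (forall y, In y l -> f y <= 1) -> list_sum (map f l) <= length l.
Proof.
  induction l as [|y l IH]; simpl; intros Hf; auto.
  specialize (Hf y (or_introl eq_refl)) as Hy.
  specialize (IH (fun z Hz => Hf z (or_intror Hz))). lia.
Qed.

Lemma list_sum_eq_length (T : Type) (f : T -> nat) (l : list T) :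
  (forall y, In y l -> f y <= 1) -> list_sum (map f l) = length l ->
  forall y, In y l -> f y = 1.
Proof.
  induction l as [|z l IH]; simpl; intros Hf Hsum y Hy; [contradiction|].
  pose proof (Hf z (or_introl eq_refl)).
  pose proof (list_sum_le_length T f l (fun u Hu => Hf u (or_intror Hu))).
  destruct Hy as [<-|Hy]; [lia|]. apply IH; auto; lia.
Qed.

Section Iteration.
Context {T : Type}.
Implicit Types (f g : T -> T) (x : T).

Lemma iter_mul_fixed f N x : Nat.iter N f x = x -> forall c, Nat.iter (c * N) f x = x.
Proof. intros H c. induction c; simpl; auto. now rewrite Nat.iter_add, IHc, H. Qed.

Lemma iter_cancel f g n x : (forall y, g (f y) = y) -> Nat.iter n g (Nat.iter n f x) = x.
Proof.
  intros H. revert x; induction n; intros x; auto.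
  now rewrite (Nat.iter_succ_r n _ g), Nat.iter_succ, H.
Qed.

Lemma iter_injective f n : (forall y z, f y = f z -> y = z) ->
  forall y z, Nat.iter n f y = Nat.iter n f z -> y = z.
Proof. intros Hf. induction n; simpl; auto. Qed.

Definition orbit_length f x l : Prop :=
  0 < l /\ Nat.iter l f x = x /\ forall j, 0 < j < l -> Nat.iter j f x <> x.

Lemma orbit_length_unique f x l l' : orbit_length f x l -> orbit_length f x l' -> l = l'.
Proof.
  intros (Hl&Hx&Hmin) (Hl'&Hx'&Hmin').
  destruct (Nat.lt_trichotomy l l') as [Hlt|[|Hlt]]; auto; exfalso.
  - apply (Hmin' l); auto.
  - apply (Hmin l'); auto.
Qed.

Lemma orbit_length_divides f x M : 0 < M -> Nat.iter M f x = x ->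
  exists l, orbit_length f x l /\ exists q, M = l * q.
Proof.
  intros HM HMx.
  assert (Hmin : exists l, orbit_length f x l /\ l <= M).
  { induction M as [M IH] using (well_founded_induction lt_wf).
    destruct (classic (exists j, 0 < j < M /\ Nat.iter j f x = x)) as [(j&Hj&Hjx)|Hno].
    - destruct (IH j) as (l&?&?); [lia..|auto|]. exists l. split; auto; lia.
    - exists M. repeat split; auto. intros j Hj Hjx. apply Hno. eauto. }
  destruct Hmin as (l&Hlen&_). exists l. split; auto. exists (M / l).
  destruct Hlen as (Hl&Hlx&Hlmin).
  assert (Hr : Nat.iter (M mod l) f x = x).
  { rewrite <- (iter_mul_fixed f l x Hlx (M / l)) at 1.
    rewrite <- Nat.iter_add, Nat.add_comm, Nat.mul_comm, <- Nat.div_mod; auto; lia. }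
  pose proof (Nat.mod_upper_bound M l ltac:(lia)).
  destruct (M mod l) eqn:E.
  - pose proof (Nat.div_mod M l ltac:(lia)). lia.
  - exfalso. apply (Hlmin (S n)); auto; lia.
Qed.

Lemma orbit_NoDup f x l : (forall y z, f y = f z -> y = z) -> orbit_length f x l ->
  NoDup (map (fun j => Nat.iter j f x) (seq 0 l)).
Proof.
  intros Hf (_&_&Hmin). apply FinFun.Injective_map_NoDup_in; [|apply seq_NoDup].
  intros i j Hi%in_seq Hj%in_seq Hij.
  enough (~ i < j /\ ~ j < i) by lia. split; intros Hlt.
  - apply (Hmin (j - i)); [lia|]. apply (iter_injective f i Hf).
    rewrite <- Nat.iter_add. now replace (i + (j - i)) with j by lia.
  - apply (Hmin (i - j)); [lia|]. apply (iter_injective f j Hf).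
    rewrite <- Nat.iter_add. now replace (j + (i - j)) with i by lia.
Qed.

End Iteration.

Lemma common_multiple (Y : Type) (P : Y -> nat -> Prop) (l : list Y) :
  (forall y N m, P y N -> P y (m * N)) ->
  (forall y, In y l -> exists N, 0 < N /\ P y N) ->
  exists N, 0 < N /\ forall y, In y l -> P y N.
Proof.
  intros Hmul. induction l as [|y l IH]; intros Hl.
  - exists 1. split; auto. intros y [].
  - destruct IH as (N1&HN1&P1); [intros; apply Hl; now right|].
    destruct (Hl y (or_introl eq_refl)) as (N2&HN2&P2).
    exists (N2 * N1). split; [lia|]. intros z [<-|Hz].
    + rewrite Nat.mul_comm. auto.
    + auto.
Qed.

Definition inverse {T : Type} (g h : T -> T) : Prop :=
  (forall t, h (g t) = t) /\ (forall t, g (h t) = t).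

Definition has_finite_order {T : Type} (f : T -> T) : Prop :=
  exists n, 0 < n /\ forall t, Nat.iter n f t = t.

Section Bijections.
Context {T : Type}.
Implicit Types (f g h u v : T -> T) (H : (T -> T) -> Prop) (l : list (T -> T)).

Lemma inverse_unique g h h' : inverse g h -> inverse g h' -> h = h'.
Proof.
  intros [_ E] [E' _]. extensionality t. now rewrite <- (E t) at 2.
Qed.

Lemma subgroup_inverse H g h : is_subgroup H -> H g -> inverse g h -> H h.
Proof.
  intros (_&_&Hinv) Hg Hgh. destruct (Hinv g Hg) as (h'&Hh'&Hgh').
  now rewrite (inverse_unique g h h' Hgh Hgh').
Qed.

Lemma gen_group_least S H g : is_subgroup H -> (forall f, S f -> H f) -> gen_group S g -> H g.
Proof.
  intros HH HS Hg. induction Hg as [| |g h _ IH1 _ IH2|g h _ IH E1 E2]; auto.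
  - apply HH.
  - now apply HH.
  - apply (subgroup_inverse H g h HH IH). split; auto.
Qed.

Lemma gen_group_subgroup S H : is_subgroup H -> (forall f, S f -> H f) ->
  is_subgroup (gen_group S).
Proof.
  intros HH HS. repeat split.
  - apply gg_id.
  - intros; now apply gg_mul.
  - intros g Hg. destruct (proj2 (proj2 HH) g (gen_group_least S H g HH HS Hg)) as (h&_&E1&E2).
    exists h. split; auto. eapply gg_inv; eauto.
Qed.

Lemma fold_left_prod_list l acc :
  fold_left (fun (acc f : T -> T) y => f (acc y)) l acc = fun t => prod_list l (acc t).
Proof.
  revert acc; induction l as [|v l IH]; intros acc; simpl; auto.
  rewrite IH. unfold prod_list at 2. simpl. now rewrite (IH (fun y => v y)).
Qed.

Lemma prod_list_cons u l : prod_list (u :: l) = fun t => prod_list l (u t).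
Proof. exact (fold_left_prod_list l u). Qed.

Lemma prod_list_app (l1 l2 : list (T -> T)) :
  prod_list (l1 ++ l2) = fun t => prod_list l2 (prod_list l1 t).
Proof.
  induction l1 as [|u l1 IH]; [reflexivity|].
  change ((u :: l1) ++ l2) with (u :: (l1 ++ l2)). now rewrite !prod_list_cons, IH.
Qed.

Lemma prod_list_in H l : is_subgroup H -> Forall H l -> H (prod_list l).
Proof.
  intros HH Hl. induction Hl as [|u l Hu _ IH]; [exact (proj1 HH)|].
  rewrite prod_list_cons. now apply HH.
Qed.

Lemma prod_list_rev_inverse l (l' : list (T -> T)) :
  Forall2 inverse l l' -> inverse (prod_list l) (prod_list (rev l')).
Proof.
  intros Hll'. induction Hll' as [|u u' l l' [E1 E2] _ [F1 F2]]; [split; auto|].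
  cbn [rev]. rewrite prod_list_cons, prod_list_app. split; intros t; simpl.
  - now rewrite F1, E1.
  - now rewrite E2, F2.
Qed.

Section Derived.
Variable H : (T -> T) -> Prop.
Hypothesis HH : is_subgroup H.

Lemma derived_conj u ui q : H u -> inverse u ui -> derived H q ->
  derived H (fun y => u (q (ui y))).
Proof.
  intros Hu [Eu1 Eu2] Hq.
  assert (Hui : H ui) by (apply (subgroup_inverse H u ui); auto; split; auto).
  destruct HH as (_&Hmul&_).
  induction Hq as [|f Hf|g h _ IH1 _ IH2|g h _ IH E1 E2].
  - replace (fun y => u (ui y)) with (fun y : T => y) by (extensionality y; auto). apply gg_id.
  - destruct Hf as (g&h&gi&hi&Hg&Hh&Eg1&Eg2&Eh1&Eh2&->). apply gg_gen.
    exists (fun y => u (g (ui y))), (fun y => u (h (ui y))),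
      (fun y => u (gi (ui y))), (fun y => u (hi (ui y))).
    repeat split; try (intros y; now rewrite Eu1, ?Eg1, ?Eg2, ?Eh1, ?Eh2).
    + apply (Hmul (fun y => g (ui y))); auto.
    + apply (Hmul (fun y => h (ui y))); auto.
    + extensionality y. now rewrite !Eu1.
  - replace (fun y => u (h (g (ui y)))) with
      (fun t => (fun y => u (h (ui y))) ((fun y => u (g (ui y))) t))
      by (extensionality y; now rewrite Eu1).
    exact (gg_mul IH1 IH2).
  - apply (gg_inv _ IH); intros t; simpl; now rewrite Eu1, ?E1, ?E2, Eu2.
Qed.

Definition eq_mod_derived u v : Prop := exists q, derived H q /\ forall y, u y = q (v y).

Lemma eq_mod_derived_refl u : eq_mod_derived u u.
Proof. exists (fun t => t). split; [apply gg_id|auto]. Qed.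

Lemma eq_mod_derived_trans u v w : eq_mod_derived u v -> eq_mod_derived v w -> eq_mod_derived u w.
Proof.
  intros (q1&Hq1&E1) (q2&Hq2&E2). exists (fun t => q1 (q2 t)).
  split; [now apply gg_mul|]. intros y. now rewrite E1, E2.
Qed.

Lemma eq_mod_derived_mul u u' v v' : H v' -> eq_mod_derived u u' -> eq_mod_derived v v' ->
  eq_mod_derived (fun t => v (u t)) (fun t => v' (u' t)).
Proof.
  intros Hv' (q1&Hq1&E1) (q2&Hq2&E2).
  destruct (proj2 (proj2 HH) v' Hv') as (vi&_&Ev).
  exists (fun t => q2 (v' (q1 (vi t)))). split.
  - apply gg_mul; auto. now apply derived_conj.
  - intros y. rewrite E2, E1, (proj1 Ev). reflexivity.
Qed.

Lemma eq_mod_derived_comm g h : H g -> H h -> eq_mod_derived (fun t => h (g t)) (fun t => g (h t)).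
Proof.
  intros Hg Hh.
  destruct (proj2 (proj2 HH) g Hg) as (gi&_&Eg1&Eg2).
  destruct (proj2 (proj2 HH) h Hh) as (hi&_&Eh1&Eh2).
  exists (fun t => h (g (hi (gi t)))). split.
  - apply gg_gen. exists g, h, gi, hi. repeat split; auto.
  - intros t. now rewrite Eg1, Eh1.
Qed.

Lemma eq_mod_derived_perm l l' : Permutation l l' -> Forall H l ->
  eq_mod_derived (prod_list l) (prod_list l').
Proof.
  intros P. induction P as [|u l l' _ IH|u v l|l l' l'' P1 IH1 P2 IH2]; intros Hl.
  - apply eq_mod_derived_refl.
  - inversion Hl; subst. rewrite !prod_list_cons.
    destruct (IH ltac:(auto)) as (q&Hq&E). exists q. split; auto.
  - inversion Hl as [|? ? Hv Hl']; inversion Hl' as [|? ? Hu Hl'']; subst.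
    rewrite !prod_list_cons. apply eq_mod_derived_mul.
    + now apply prod_list_in.
    + now apply eq_mod_derived_comm.
    + apply eq_mod_derived_refl.
  - apply (eq_mod_derived_trans _ (prod_list l')); auto.
    apply IH2. now rewrite <- P1.
Qed.

Lemma eq_mod_derived_prod (K : Type) (F : K -> T -> T) (P : (T -> T) -> Prop) (L : list K) :
  is_subgroup P -> (forall f, P f -> H f) ->
  (forall k, In k L -> exists g, P g /\ eq_mod_derived (F k) g) ->
  exists g, P g /\ eq_mod_derived (prod_list (map F L)) g.
Proof.
  intros HP HPH. induction L as [|k L IH]; intros HL.
  - exists (fun t => t). split; [apply HP|apply eq_mod_derived_refl].
  - destruct (HL k (or_introl eq_refl)) as (g&Hg&Eg).
    destruct IH as (g'&Hg'&Eg'); [intros; apply HL; now right|].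
    exists (fun t => g' (g t)). split; [now apply HP|].
    cbn [map]. rewrite prod_list_cons. now apply eq_mod_derived_mul; auto.
Qed.

End Derived.
End Bijections.

(** * Constant spinal groups and words over their generators *)

Section ConstantSpinal.
Variable X : Type.
Variable x0 : X.
Variable A : (X -> X) -> Prop.
Variables B Sg : (list X -> list X) -> Prop.
Hypothesis HCS : is_CS x0 A B.
Hypothesis HS : generates Sg B.

Let eqX (y z : X) : {y = z} + {y <> z} := excluded_middle_informative (y = z).

Lemma A_subgroup : is_subgroup A.
Proof. apply HCS. Qed.

Lemma A_id : A (fun t => t).
Proof. apply A_subgroup. Qed.

Lemma A_mul g h : A g -> A h -> A (fun t => h (g t)).
Proof. apply A_subgroup. Qed.

Lemma A_inverse g : A g -> exists h, A h /\ inverse g h.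
Proof. apply A_subgroup. Qed.

Lemma A_iter a n : A a -> A (Nat.iter n a).
Proof. intros Ha. induction n; [apply A_id|]. exact (A_mul _ _ IHn Ha). Qed.

Lemma A_injective a y z : A a -> a y = a z -> y = z.
Proof.
  intros Ha E. destruct (A_inverse a Ha) as (h&_&Eh&_). now rewrite <- (Eh y), E, Eh.
Qed.

Lemma B_subgroup : is_subgroup B.
Proof. apply HCS. Qed.

Lemma S_in_B s : Sg s -> B s.
Proof. apply HS. Qed.

Lemma B_nil b : B b -> b [] = [].
Proof. intros Hb. destruct HCS as (_&_&_&HB&_). apply (HB b Hb). Qed.

Lemma tree_aut_app (g : list X -> list X) (w v : list X) :
  is_tree_aut g -> exists z, g (w ++ v) = g w ++ z.
Proof.
  intros (_&_&Hg). induction v as [|y v IH] using rev_ind.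
  - exists []. now rewrite !app_nil_r.
  - destruct IH as [z Hz]. destruct (Hg (w ++ v) y) as [y' Hy'].
    exists (z ++ [y']). now rewrite app_assoc, Hy', Hz, app_assoc.
Qed.

Lemma B_cons b y v : B b -> b (y :: v) = y :: section b [y] v.
Proof.
  intros Hb. destruct HCS as (_&_&_&HB&_). destruct (HB b Hb) as [Hb_aut Hb_St1].
  destruct (tree_aut_app b [y] v Hb_aut) as [z Hz]. simpl in Hz.
  unfold section. simpl. now rewrite Hz, Hb_St1.
Qed.

Lemma B_cons_x0 b v : B b -> b (x0 :: v) = x0 :: b v.
Proof.
  intros Hb. rewrite B_cons by auto. destruct HCS as (_&_&_&_&_&HB0&_). now rewrite HB0.
Qed.

Lemma B_cons_neq b y v : B b -> y <> x0 -> b (y :: v) = y :: rooted (secA b y) v.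
Proof.
  intros Hb Hy. rewrite B_cons by auto. destruct HCS as (_&_&_&_&_&_&HBy&_).
  now rewrite (proj2 (HBy b y Hb Hy)).
Qed.

Lemma B_secA b y : B b -> y <> x0 -> A (secA b y).
Proof. intros Hb Hy. destruct HCS as (_&_&_&_&_&_&HBy&_). now apply HBy. Qed.

Lemma secA_inverse s si y : B s -> inverse s si -> y <> x0 -> inverse (secA s y) (secA si y).
Proof.
  intros Hs [E1 E2] Hy.
  assert (Hsi : B si) by (apply (subgroup_inverse B s si B_subgroup Hs); split; auto).
  split; intros z.
  - specialize (E1 [y; z]). rewrite (B_cons_neq s), (B_cons_neq si) in E1; auto.
    simpl in E1. congruence.
  - specialize (E2 [y; z]). rewrite (B_cons_neq si), (B_cons_neq s) in E2; auto.
    simpl in E2. congruence.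
Qed.

(* [LA a] is the rooted automorphism of [a] and [LB b] a directed generator or its inverse *)
Inductive letter := LA (a : X -> X) | LB (b : list X -> list X).

Definition letter_ok (l : letter) : Prop :=
  match l with
  | LA a => A a
  | LB b => Sg b \/ exists s, Sg s /\ inverse s b
  end.

Definition word_ok (w : list letter) : Prop := Forall letter_ok w.

Definition eval_letter (l : letter) : list X -> list X :=
  match l with LA a => rooted a | LB b => b end.

Fixpoint eval_word (w : list letter) (v : list X) : list X :=
  match w with [] => v | l :: w' => eval_word w' (eval_letter l v) end.

Definition letter_root (l : letter) : X -> X :=
  match l with LA a => a | LB _ => fun y => y end.

Definition word_root (w : list letter) : X -> X := prod_list (map letter_root w).

Definition directed_section (b : list X -> list X) (y : X) : list letter :=
  if eqX y x0 then [LB b] else [LA (secA b y)].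

Definition letter_section (l : letter) (y : X) : list letter :=
  match l with LA _ => [] | LB b => directed_section b y end.

Fixpoint word_section (w : list letter) (y : X) : list letter :=
  match w with
  | [] => []
  | l :: w' => letter_section l y ++ word_section w' (letter_root l y)
  end.

Definition letter_weight (l : letter) : nat := match l with LA _ => 0 | LB _ => 1 end.

Definition count_B (w : list letter) : nat := list_sum (map letter_weight w).

Fixpoint word_pow (w : list letter) (n : nat) : list letter :=
  match n with 0 => [] | S n => w ++ word_pow w n end.

(* the directed letters of a word, each paired with the root permutation of the prefix before it *)
Fixpoint B_letters (w : list letter) : list ((list X -> list X) * (X -> X)) :=
  match w with
  | [] => []
  | LA a :: w' => map (fun bp => (fst bp, fun y => snd bp (a y))) (B_letters w')
  | LB b :: w' => (b, fun y => y) :: B_letters w'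
  end.

Lemma letter_ok_B b : letter_ok (LB b) -> B b.
Proof.
  intros [Hb|(s&Hs&Hsb)]; [now apply S_in_B|].
  exact (subgroup_inverse B s b B_subgroup (S_in_B s Hs) Hsb).
Qed.

Lemma eval_word_app w1 w2 v : eval_word (w1 ++ w2) v = eval_word w2 (eval_word w1 v).
Proof. revert v; induction w1; simpl; auto. Qed.

Lemma word_root_app w1 w2 : word_root (w1 ++ w2) = fun y => word_root w2 (word_root w1 y).
Proof. unfold word_root. now rewrite map_app, prod_list_app. Qed.

Lemma word_root_cons l w : word_root (l :: w) = fun y => word_root w (letter_root l y).
Proof. apply prod_list_cons. Qed.

Lemma word_section_app w1 w2 y :
  word_section (w1 ++ w2) y = word_section w1 y ++ word_section w2 (word_root w1 y).
Proof.
  revert y; induction w1 as [|l w1 IH]; intros y; simpl; auto.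
  now rewrite IH, app_assoc, word_root_cons.
Qed.

Lemma count_B_app w1 w2 : count_B (w1 ++ w2) = count_B w1 + count_B w2.
Proof. unfold count_B. now rewrite map_app, list_sum_app. Qed.

Lemma count_B_flat_map (Y : Type) (f : Y -> list letter) (l : list Y) :
  count_B (flat_map f l) = list_sum (map (fun y => count_B (f y)) l).
Proof. induction l; simpl; auto. now rewrite count_B_app, IHl. Qed.

Lemma count_B_perm w w' : Permutation w w' -> count_B w = count_B w'.
Proof. intros P. apply Permutation_list_sum. now apply Permutation_map. Qed.

Lemma word_ok_directed_section b y : letter_ok (LB b) -> word_ok (directed_section b y).
Proof.
  intros Hb. unfold directed_section.
  destruct (eqX y x0); (constructor; [|constructor]); auto.
  now apply B_secA; [apply letter_ok_B|].
Qed.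

Lemma word_ok_section w y : word_ok w -> word_ok (word_section w y).
Proof.
  revert y; induction w as [|[a|b] w IH]; intros y Hw; simpl; [constructor| |];
    inversion Hw; subst; auto.
  apply Forall_app. split; [now apply word_ok_directed_section|now apply IH].
Qed.

Lemma word_ok_pow w n : word_ok w -> word_ok (word_pow w n).
Proof. intros Hw. induction n; simpl; [constructor|now apply Forall_app]. Qed.

Lemma word_root_in_A w : word_ok w -> A (word_root w).
Proof.
  intros Hw. apply (prod_list_in A); [apply A_subgroup|].
  induction Hw as [|[a|b] w Hl _ IH]; simpl; constructor; auto. apply A_id.
Qed.

Lemma eval_letter_cons l y v : letter_ok l ->
  eval_letter l (y :: v) = letter_root l y :: eval_word (letter_section l y) v.
Proof.
  destruct l as [a|b]; simpl; intros Hl; auto.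
  apply letter_ok_B in Hl. unfold directed_section.
  destruct (eqX y x0) as [->|Hy]; simpl; [apply B_cons_x0|apply B_cons_neq]; auto.
Qed.

Lemma eval_word_nil w : word_ok w -> eval_word w [] = [].
Proof.
  induction 1 as [|[a|b] w Hl _ IH]; simpl; auto.
  now rewrite B_nil by now apply letter_ok_B.
Qed.

Lemma eval_word_cons w y v : word_ok w ->
  eval_word w (y :: v) = word_root w y :: eval_word (word_section w y) v.
Proof.
  intros Hw. revert y v; induction Hw as [|l w Hl _ IH]; intros y v; simpl; auto.
  now rewrite eval_letter_cons, IH, eval_word_app, word_root_cons.
Qed.

Lemma eval_word_pow w n v : eval_word (word_pow w n) v = Nat.iter n (eval_word w) v.
Proof.
  revert v; induction n; intros v; simpl; auto.
  now rewrite eval_word_app, IHn, <- Nat.iter_succ_r.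
Qed.

Lemma word_root_pow w n y : word_root (word_pow w n) y = Nat.iter n (word_root w) y.
Proof.
  revert y; induction n; intros y; simpl; auto.
  now rewrite word_root_app, IHn, <- Nat.iter_succ_r.
Qed.

Lemma word_pow_add w p q : word_pow w (p + q) = word_pow w p ++ word_pow w q.
Proof. induction p; simpl; auto. now rewrite IHp, app_assoc. Qed.

Lemma word_section_pow w n y : word_section (word_pow w n) y =
  flat_map (fun j => word_section w (Nat.iter j (word_root w) y)) (seq 0 n).
Proof.
  revert y; induction n; intros y; simpl; auto.
  rewrite word_section_app, IHn, <- seq_shift, flat_map_map.
  f_equal. apply flat_map_ext. intros j.
  now rewrite <- Nat.iter_succ_r.
Qed.

Lemma word_section_pow_mul w l c y : Nat.iter l (word_root w) y = y ->
  word_section (word_pow w (l * c)) y = word_pow (word_section (word_pow w l) y) c.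
Proof.
  intros Hy. induction c; simpl; [now rewrite Nat.mul_0_r|].
  now rewrite Nat.mul_succ_r, Nat.add_comm, word_pow_add, word_section_app, word_root_pow, Hy, IHc.
Qed.

Lemma word_section_B_letters w y :
  word_section w y = flat_map (fun bp => directed_section (fst bp) (snd bp y)) (B_letters w).
Proof.
  revert y; induction w as [|[a|b] w IH]; intros y; simpl; auto.
  - now rewrite IH, flat_map_map.
  - now rewrite IH.
Qed.

Lemma count_B_B_letters w : count_B w = length (B_letters w).
Proof.
  unfold count_B. induction w as [|[a|b] w IH]; simpl; auto. now rewrite length_map.
Qed.

Lemma B_letters_ok w : word_ok w ->
  forall bp, In bp (B_letters w) -> letter_ok (LB (fst bp)) /\ A (snd bp).
Proof.
  induction 1 as [|[a|b] w Hl _ IH]; simpl; intros bp Hbp; [contradiction| |].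
  - apply in_map_iff in Hbp as (bp'&<-&Hbp'). destruct (IH bp' Hbp').
    simpl. split; auto. now apply A_mul.
  - destruct Hbp as [<-|Hbp]; [split; auto; apply A_id|now apply IH].
Qed.

(** * Directed letters in sections of powers *)

(* the first-level vertices at which a directed letter preceded by [p] acts, along the orbit of
   [x] under [a] *)
Definition trace (a p : X -> X) (x : X) (l : nat) : list X :=
  map (fun j => p (Nat.iter j a x)) (seq 0 l).

Lemma word_section_pow_perm w x l :
  Permutation (word_section (word_pow w l) x)
    (flat_map (fun bp => flat_map (directed_section (fst bp)) (trace (word_root w) (snd bp) x l))
       (B_letters w)).
Proof.
  rewrite word_section_pow.
  erewrite flat_map_ext by (intros j; apply word_section_B_letters).
  rewrite (flat_map_exchange _ _ _
    (fun bp j => directed_section (fst bp) (snd bp (Nat.iter j _ x)))).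
  apply Permutation_refl'. apply flat_map_ext. intros bp. unfold trace. now rewrite flat_map_map.
Qed.

Lemma count_B_directed b L : count_B (flat_map (directed_section b) L) = count_occ eqX L x0.
Proof.
  induction L as [|y L IH]; simpl; auto. rewrite count_B_app, IH.
  unfold directed_section. now destruct (eqX y x0).
Qed.

Lemma trace_NoDup a p x l : A a -> A p -> orbit_length a x l -> NoDup (trace a p x l).
Proof.
  intros Ha Hp Hl. unfold trace. rewrite <- map_map.
  apply FinFun.Injective_map_NoDup; [intros y z; now apply A_injective|].
  apply orbit_NoDup; auto. intros y z. now apply A_injective.
Qed.

Section Counting.
Variables (w : list letter) (x : X) (l : nat).
Hypothesis Hw : word_ok w.
Hypothesis Hl : orbit_length (word_root w) x l.

Lemma count_B_section_pow : count_B (word_section (word_pow w l) x) =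
  list_sum (map (fun bp => count_occ eqX (trace (word_root w) (snd bp) x l) x0) (B_letters w)).
Proof.
  rewrite (count_B_perm _ _ (word_section_pow_perm w x l)), count_B_flat_map.
  f_equal. apply map_ext. intros bp. apply count_B_directed.
Qed.

Lemma count_occ_trace_le1 bp : In bp (B_letters w) ->
  count_occ eqX (trace (word_root w) (snd bp) x l) x0 <= 1.
Proof.
  intros Hbp. apply NoDup_count_occ, trace_NoDup; auto.
  - now apply word_root_in_A.
  - now apply (B_letters_ok w Hw).
Qed.

Lemma count_B_section_pow_cases :
  count_B (word_section (word_pow w l) x) < count_B w \/
  (count_B (word_section (word_pow w l) x) = count_B w /\
   forall bp, In bp (B_letters w) -> In x0 (trace (word_root w) (snd bp) x l)).
Proof.
  rewrite count_B_section_pow, count_B_B_letters.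
  pose proof (list_sum_le_length _ _ _ count_occ_trace_le1) as Hle.
  apply Nat.lt_eq_cases in Hle as [Hlt|Heq]; [now left|right].
  split; auto. intros bp Hbp. apply (count_occ_In eqX).
  rewrite (list_sum_eq_length _ _ _ count_occ_trace_le1 Heq bp Hbp). auto.
Qed.

End Counting.

(** * Rooted parts of sections and the map sigma *)

Definition directed_root (b : list X -> list X) (y : X) : X -> X :=
  if eqX y x0 then fun t => t else secA b y.

Lemma directed_root_x0 b : directed_root b x0 = fun t => t.
Proof. unfold directed_root. now destruct (eqX x0 x0). Qed.

Lemma directed_root_neq b y : y <> x0 -> directed_root b y = secA b y.
Proof. unfold directed_root. now destruct (eqX y x0). Qed.

Lemma word_root_flat_map (Y : Type) (f : Y -> list letter) (L : list Y) :
  word_root (flat_map f L) = prod_list (map (fun y => word_root (f y)) L).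
Proof.
  induction L as [|y L IH]; auto.
  cbn [flat_map map]. rewrite word_root_app, IH, prod_list_cons. reflexivity.
Qed.

Lemma letter_roots_directed b L :
  map letter_root (flat_map (directed_section b) L) = map (directed_root b) L.
Proof.
  induction L as [|y L IH]; auto. cbn [flat_map map]. rewrite map_app, IH.
  unfold directed_section, directed_root. now destruct (eqX y x0).
Qed.

(* [d = p a p^-1] is conjugate to [a] by an element of [A] sending [0] to [x], and its orbit
   through [0] is the trace rotated to start at [0]. *)
Lemma conjugate_orbit a p x l : A a -> A p -> orbit_length a x l -> In x0 (trace a p x l) ->
  exists d, Cset x0 A a x d /\ orbit_length d x0 l /\
    Permutation (trace a p x l) (map (fun k => Nat.iter k d x0) (seq 0 l)).
Proof.
  intros Ha Hp (Hl&Hlx&Hlmin) Hx0.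
  apply in_map_iff in Hx0 as (j&Hj&Hjl%in_seq).
  destruct (A_inverse p Hp) as (pi&Hpi&Ep1&Ep2).
  destruct (A_inverse a Ha) as (ai&Hai&Ea1&Ea2).
  set (d := fun y => p (a (pi y))).
  assert (Hd : forall k, Nat.iter k d x0 = p (Nat.iter (k + j) a x)).
  { intros k. rewrite Nat.iter_add, <- Hj. symmetry.
    apply Nat.iter_swap_gen. intros z. unfold d. now rewrite Ep1. }
  assert (Hper : forall k, p (Nat.iter (k + l) a x) = p (Nat.iter k a x))
    by (intros k; now rewrite Nat.iter_add, Hlx).
  exists d. repeat split.
  - exists (fun y => Nat.iter j ai (pi y)), (fun y => p (Nat.iter j a y)).
    split; [|split; [|split; [|split; [|split]]]]; try intros y.
    + apply A_mul; [auto|now apply A_iter].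
    + rewrite <- Hj, Ep1. now apply iter_cancel.
    + apply A_mul; [now apply A_iter|auto].
    + rewrite (iter_cancel ai a); auto.
    + rewrite Ep1. now apply iter_cancel.
    + unfold d. rewrite Nat.iter_swap, (iter_cancel ai a); auto.
  - auto.
  - rewrite Hd, <- Hj, Nat.add_comm. now rewrite Nat.iter_add, Hlx.
  - intros k Hk E. rewrite Hd, <- Hj in E. apply (A_injective p) in E; auto.
    rewrite Nat.add_comm, Nat.iter_add in E. apply (Hlmin k Hk), (iter_injective a j); auto.
    intros y z. now apply A_injective.
  - unfold trace. rewrite (map_ext _ _ Hd).
    apply (map_seq_rotate _ (fun k => p (Nat.iter k a x))); auto. lia.
Qed.

Section SigmaGenerators.
Variables (a : X -> X) (x : X).

Let H := Hgroup x0 A Sg a x.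

Lemma Hgroup_subgroup : is_subgroup H.
Proof.
  apply (gen_group_subgroup _ A A_subgroup). intros f (b&y&Hb&(c&k&_&_&Hy)&->).
  now apply B_secA; [apply S_in_B|].
Qed.

Lemma Hgroup_secA b y : letter_ok (LB b) -> Xset x0 A a x y -> H (secA b y).
Proof.
  intros [Hb|(s&Hs&Hsb)] Hy; [apply gg_gen; now exists b, y|].
  assert (y <> x0) by now destruct Hy as (?&?&?&?&?).
  apply (subgroup_inverse H (secA s y)); [apply Hgroup_subgroup| |].
  - apply gg_gen. now exists s, y.
  - now apply secA_inverse; [apply S_in_B|..].
Qed.

Lemma sigma_gens_in_Hgroup f : gen_group (sigma_gens x0 A Sg a x) f -> H f.
Proof.
  apply (gen_group_least _ _ _ Hgroup_subgroup). intros f' (c&b&l&Hc&Hb&Hl&Hcl&Hmin&->).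
  apply (prod_list_in H _ Hgroup_subgroup), Forall_forall.
  intros g (k&<-&Hk%in_seq)%in_map_iff. apply gg_gen.
  exists b, (Nat.iter k c x0). repeat split; auto. exists c, k. repeat split; auto.
  apply Hmin. lia.
Qed.

Section Orbit.
Variables (d : X -> X) (l : nat).
Hypothesis Hd : Cset x0 A a x d.
Hypothesis Hl : orbit_length d x0 l.

Let orbit := map (fun k => Nat.iter k d x0) (seq 0 l).

Lemma directed_root_orbit b y : letter_ok (LB b) -> In y orbit -> H (directed_root b y).
Proof.
  intros Hb (k&<-&_)%in_map_iff.
  destruct (eqX (Nat.iter k d x0) x0) as [->|Hk].
  - rewrite directed_root_x0. apply Hgroup_subgroup.
  - rewrite directed_root_neq by auto. apply Hgroup_secA; auto. now exists d, k.
Qed.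

Lemma prod_directed_root_orbit b : prod_list (map (directed_root b) orbit) =
  prod_list (map (fun k => secA b (Nat.iter k d x0)) (seq 1 (l - 1))).
Proof.
  destruct Hl as (Hl0&_&Hmin). unfold orbit.
  replace (seq 0 l) with (0 :: seq 1 (l - 1)) by (destruct l; [lia|simpl; now rewrite Nat.sub_0_r]).
  rewrite map_map. cbn [map Nat.iter]. rewrite prod_list_cons, directed_root_x0.
  rewrite (map_ext_in _ (fun k => secA b (Nat.iter k d x0))); [reflexivity|].
  intros k Hk%in_seq. apply directed_root_neq, Hmin. lia.
Qed.

Lemma directed_orbit_sigma b : letter_ok (LB b) ->
  exists g, gen_group (sigma_gens x0 A Sg a x) g /\
    eq_mod_derived H (prod_list (map (directed_root b) orbit)) g.
Proof.
  intros Hb. rewrite prod_directed_root_orbit. destruct Hl as (Hl0&Hlx&Hmin).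
  destruct Hb as [Hb|(s&Hs&Hsb)].
  - eexists. split; [|apply eq_mod_derived_refl]. apply gg_gen. now exists d, b, l.
  - (* for [b = s^-1] the product is the inverse of the [s]-generator read backwards *)
    set (secs := fun c => map (fun k => secA c (Nat.iter k d x0)) (seq 1 (l - 1))).
    exists (prod_list (rev (secs b))). split.
    + assert (Hinv : inverse (prod_list (secs s)) (prod_list (rev (secs b)))).
      { apply prod_list_rev_inverse, Forall2_map_pointwise. intros k Hk%in_seq.
        apply secA_inverse; auto; [now apply S_in_B|]. apply Hmin. lia. }
      destruct Hinv as [E1 E2]. apply (gg_inv _ (g := prod_list (secs s))); auto.
      apply gg_gen. now exists d, s, l.
    + apply eq_mod_derived_perm; [apply Hgroup_subgroup|apply Permutation_rev|].
      apply Forall_forall. intros g (k&<-&Hk%in_seq)%in_map_iff.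
      apply Hgroup_secA; [right; now exists s|]. exists d, k. repeat split; auto.
      apply Hmin. lia.
Qed.

End Orbit.

Lemma directed_trace_sigma b p l : A a -> A p -> letter_ok (LB b) ->
  orbit_length a x l -> In x0 (trace a p x l) ->
  Forall H (map (directed_root b) (trace a p x l)) /\
  exists g, gen_group (sigma_gens x0 A Sg a x) g /\
    eq_mod_derived H (prod_list (map (directed_root b) (trace a p x l))) g.
Proof.
  intros Ha Hp Hb Hl Hx0.
  destruct (conjugate_orbit a p x l Ha Hp Hl Hx0) as (d&Hd&Hdl&Hperm).
  assert (Horbit : Forall H (map (directed_root b) (map (fun k => Nat.iter k d x0) (seq 0 l)))).
  { apply Forall_forall. intros f (y&<-&Hy)%in_map_iff. now apply (directed_root_orbit d l). }
  assert (Htrace : Forall H (map (directed_root b) (trace a p x l))).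
  { apply (Permutation_Forall (Permutation_map _ (Permutation_sym Hperm))), Horbit. }
  split; auto.
  destruct (directed_orbit_sigma d l Hd Hdl b Hb) as (g&Hg&Eg). exists g. split; auto.
  apply (eq_mod_derived_trans H _ _ _ (eq_mod_derived_perm H Hgroup_subgroup _ _
           (Permutation_map _ Hperm) Htrace) Eg).
Qed.

End SigmaGenerators.

Lemma sigma_of_section w x l : word_ok w -> orbit_length (word_root w) x l ->
  (forall bp, In bp (B_letters w) -> In x0 (trace (word_root w) (snd bp) x l)) ->
  sigma x0 A Sg (word_root w) x (word_root (word_section (word_pow w l) x)).
Proof.
  intros Hw Hl Hhit. set (a := word_root w). set (H := Hgroup x0 A Sg a x).
  assert (Hcontrib : forall bp, In bp (B_letters w) ->
    Forall H (map (directed_root (fst bp)) (trace a (snd bp) x l)) /\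
    exists g, gen_group (sigma_gens x0 A Sg a x) g /\
      eq_mod_derived H (prod_list (map (directed_root (fst bp)) (trace a (snd bp) x l))) g).
  { intros bp Hbp. destruct (B_letters_ok w Hw bp Hbp).
    apply directed_trace_sigma; auto. now apply word_root_in_A. }
  set (w' := flat_map (fun bp => flat_map (directed_section (fst bp)) (trace a (snd bp) x l))
               (B_letters w)).
  assert (Hw' : Forall H (map letter_root w')).
  { apply Forall_map, Forall_flat_map, Forall_forall. intros bp Hbp.
    apply Forall_map. rewrite letter_roots_directed. now apply Hcontrib. }
  assert (Hsec : eq_mod_derived H (word_root (word_section (word_pow w l) x)) (word_root w')).
  { pose proof (Permutation_map letter_root (word_section_pow_perm w x l)) as Hperm.
    apply (eq_mod_derived_perm H (Hgroup_subgroup a x) _ _ Hperm).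
    exact (Permutation_Forall (Permutation_sym Hperm) Hw'). }
  destruct (eq_mod_derived_prod H (Hgroup_subgroup a x) _
    (fun bp => prod_list (map (directed_root (fst bp)) (trace a (snd bp) x l)))
    (gen_group (sigma_gens x0 A Sg a x)) (B_letters w)) as (g&Hg&Eg).
  - apply (gen_group_subgroup _ H (Hgroup_subgroup a x)). intros f Hf.
    now apply sigma_gens_in_Hgroup, gg_gen.
  - apply sigma_gens_in_Hgroup.
  - intros bp Hbp. now apply Hcontrib.
  - assert (Hroot : word_root w' =
      prod_list (map (fun bp => prod_list (map (directed_root (fst bp)) (trace a (snd bp) x l)))
                   (B_letters w))).
    { unfold w'. rewrite word_root_flat_map. f_equal. apply map_ext. intros bp.
      unfold word_root. now rewrite letter_roots_directed. }
    rewrite <- Hroot in Eg. destruct (eq_mod_derived_trans H _ _ _ Hsec Eg) as (q&Hq&Eq).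
    now exists g, q.
Qed.

(** * Periodicity *)

Definition word_of (g : list X -> list X) : Prop :=
  exists w wi, word_ok w /\ word_ok wi /\ eval_word w = g /\ inverse g (eval_word wi).

Lemma word_of_gen_group (Gens : (list X -> list X) -> Prop) :
  (forall g, Gens g -> word_of g) -> forall g, gen_group Gens g -> word_of g.
Proof.
  intros HGens g Hg.
  induction Hg as [|g Hg|g h _ (w1&wi1&?&?&E1&I1) _ (w2&wi2&?&?&E2&I2)|g h _ IH E1 E2].
  - exists [], []. repeat split; constructor.
  - auto.
  - exists (w1 ++ w2), (wi2 ++ wi1). destruct I1 as [I1 J1], I2 as [I2 J2].
    repeat split; try (apply Forall_app; now split); [|intros t..].
    + extensionality t. now rewrite eval_word_app, E1, E2.
    + now rewrite eval_word_app, I2, I1.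
    + now rewrite eval_word_app, J1, J2.
  - destruct IH as (w&wi&Hw&Hwi&Ew&Hinv). exists wi, w.
    rewrite (inverse_unique g (eval_word wi) h Hinv) by (split; auto).
    repeat split; auto; intros t; now rewrite Ew.
Qed.

Lemma word_of_CS_group g : CS_group A B g -> word_of g.
Proof.
  apply word_of_gen_group. intros f [(a&Ha&->)|Hb].
  - destruct (A_inverse a Ha) as (ai&Hai&Ea1&Ea2). exists [LA a], [LA ai].
    repeat split; repeat constructor; auto; intros [|y v]; simpl; congruence.
  - apply HS in Hb. revert f Hb. apply word_of_gen_group. intros s Hs.
    destruct (proj2 (proj2 B_subgroup) s (S_in_B s Hs)) as (si&_&Hsi).
    exists [LB s], [LB si].
    split; [constructor; [now left|constructor]|].
    split; [constructor; [right; now exists s|constructor]|].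
    split; [reflexivity|exact Hsi].
Qed.

Definition trivial_after (t : nat) (u : X -> X) : Prop :=
  forall m, t <= m -> forall z, Nat.iter m (Sigma x0 A Sg) (fun f => f = u) z -> forall y, z y = y.

Lemma Sigma_iter_mono m (P Q : (X -> X) -> Prop) : (forall f, P f -> Q f) ->
  forall f, Nat.iter m (Sigma x0 A Sg) P f -> Nat.iter m (Sigma x0 A Sg) Q f.
Proof.
  revert P Q; induction m; intros P Q HPQ f; simpl; auto.
  intros (u&y&Hu&Hs). exists u, y. split; auto. eapply IHm; eauto.
Qed.

Lemma trivial_after_sigma t u x u' : trivial_after (S t) u -> sigma x0 A Sg u x u' ->
  trivial_after t u'.
Proof.
  intros Ht Hs m Hm z Hz. apply (Ht (S m)); [lia|].
  rewrite Nat.iter_succ_r. revert Hz. apply Sigma_iter_mono.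
  intros f ->. now exists u, x.
Qed.

Lemma trivial_after_exists u : eventually_trivial x0 A Sg -> A u -> exists t, trivial_after t u.
Proof.
  intros Hev Hu. destruct (Hev u Hu) as [n Hn]. exists (S n).
  intros m Hm. apply Hn. lia.
Qed.

Lemma trivial_after_0 u : trivial_after 0 u -> forall y, u y = y.
Proof. intros Ht. now apply (Ht 0). Qed.

Lemma iter_rooted n (u : X -> X) v : Nat.iter n (rooted u) v = rooted (Nat.iter n u) v.
Proof. destruct v as [|y v]; induction n; simpl; try rewrite IHn; auto. Qed.

Lemma eval_word_rooted (U : (X -> X) -> Prop) (h : list letter) :
  U (fun t => t) -> (forall g g', U g -> U g' -> U (fun t => g' (g t))) ->
  Forall (fun l => exists u, l = LA u /\ U u) h ->
  eval_word h = rooted (word_root h) /\ U (word_root h).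
Proof.
  intros HU1 HUmul Hh. induction Hh as [|l h (u&->&Hu) _ [IH1 IH2]].
  - split; auto. extensionality v. now destruct v.
  - rewrite word_root_cons. split; [|now apply HUmul].
    extensionality v. destruct v; simpl; now rewrite IH1.
Qed.

Lemma eval_word_directed (h : list letter) :
  Forall (fun l => exists b, l = LB b /\ B b) h -> B (eval_word h).
Proof.
  intros Hh. induction Hh as [|l h (b&->&Hb) _ IH]; [exact (proj1 B_subgroup)|].
  exact (proj1 (proj2 B_subgroup) b _ Hb IH).
Qed.

Lemma section_directed w x l : word_ok w -> (forall y, word_root w y = y) ->
  orbit_length (word_root w) x l ->
  (forall bp, In bp (B_letters w) -> In x0 (trace (word_root w) (snd bp) x l)) ->
  B (eval_word (word_section (word_pow w l) x)).
Proof.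
  intros Hw Hid Hl Hhit.
  assert (Hl1 : l = 1).
  { apply (orbit_length_unique _ _ _ _ Hl). repeat split; simpl; auto; lia. }
  subst l. cbn [word_pow]. rewrite app_nil_r, word_section_B_letters.
  apply eval_word_directed, Forall_flat_map, Forall_forall. intros bp Hbp.
  destruct (Hhit bp Hbp) as [Hx0|[]]. simpl in Hx0. unfold directed_section.
  rewrite Hx0. destruct (eqX x0 x0) as [_|]; [|contradiction].
  repeat constructor. exists (fst bp). split; auto.
  apply letter_ok_B, (B_letters_ok w Hw bp Hbp).
Qed.

Section Periodicity.
Hypothesis HAper : periodic A.
Hypothesis Hev : eventually_trivial x0 A Sg.
(* [U] is [A] when [A] has finite exponent, and [{id}] when [B] has finite support *)
Variable U : (X -> X) -> Prop.
Variable e : nat.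
Hypothesis He : 0 < e.
Hypothesis HU_id : U (fun t => t).
Hypothesis HU_mul : forall g g', U g -> U g' -> U (fun t => g' (g t)).
Hypothesis HU_exp : forall u, U u -> forall t, Nat.iter e u t = t.
Hypothesis HU_B : forall b, B b -> exists L, forall y, ~ In y L -> y <> x0 /\ U (secA b y).

Lemma iter_B_cons_x0 n b v : B b -> Nat.iter n b (x0 :: v) = x0 :: Nat.iter n b v.
Proof.
  intros Hb. symmetry. apply (Nat.iter_swap_gen _ _ (cons x0)). intros u.
  symmetry. now apply B_cons_x0.
Qed.

Lemma iter_B_cons_neq n b y v : B b -> y <> x0 ->
  Nat.iter n b (y :: v) = y :: rooted (Nat.iter n (secA b y)) v.
Proof.
  intros Hb Hy. rewrite <- iter_rooted. symmetry. apply (Nat.iter_swap_gen _ _ (cons y)).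
  intros u. symmetry. now apply B_cons_neq.
Qed.

Lemma B_finite_order b : B b -> has_finite_order b.
Proof.
  intros Hb. destruct (HU_B b Hb) as [L HL].
  destruct (common_multiple _ (fun y N => y <> x0 -> forall t, Nat.iter N (secA b y) t = t) L)
    as (N&HN&HNL).
  - intros y N m HyN Hy t. now apply iter_mul_fixed, HyN.
  - intros y _. destruct (eqX y x0) as [->|Hy]; [exists 1; split; [lia|now intros []]|].
    destruct (HAper _ (B_secA b y Hb Hy)) as (N&HN&HNy). exists N. auto.
  - exists (e * N). split; [lia|]. intros v. induction v as [|y v IH].
    + induction (e * N); simpl; [auto|now rewrite IHn, B_nil].
    + destruct (eqX y x0) as [->|Hy]; [now rewrite iter_B_cons_x0, IH|].
      rewrite iter_B_cons_neq by auto. f_equal. destruct v as [|t v]; simpl; f_equal.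
      destruct (classic (In y L)) as [Hin|Hout].
      * now apply iter_mul_fixed, HNL.
      * rewrite Nat.mul_comm. now apply iter_mul_fixed, HU_exp, HL.
Qed.

Lemma orbit_avoids (a p pi : X -> X) M (L : list X) x j :
  0 < M -> (forall t, Nat.iter M a t = t) -> (forall t, pi (p t) = t) ->
  ~ In x (flat_map (fun y => map (fun i => Nat.iter i a (pi y)) (seq 0 (S M))) L) ->
  ~ In (p (Nat.iter j a x)) L.
Proof.
  intros HM HMa Hpi Hx Hin. apply Hx, in_flat_map. exists (p (Nat.iter j a x)). split; auto.
  rewrite Hpi. apply in_map_iff. exists (M - j mod M).
  pose proof (Nat.mod_upper_bound j M ltac:(lia)). split; [|apply in_seq; lia].
  assert (Hj : Nat.iter j a x = Nat.iter (j mod M) a x).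
  { transitivity (Nat.iter (j mod M + j / M * M) a x).
    - f_equal. pose proof (Nat.div_mod_eq j M). lia.
    - rewrite Nat.iter_add. f_equal. now apply iter_mul_fixed. }
  rewrite Hj, <- Nat.iter_add. now replace (M - j mod M + j mod M) with M by lia.
Qed.

Lemma sections_in_U_off_finite (a : X -> X) M (bps : list ((list X -> list X) * (X -> X))) :
  0 < M -> (forall t, Nat.iter M a t = t) ->
  (forall bp, In bp bps -> B (fst bp) /\ A (snd bp)) ->
  exists R, forall x, ~ In x R -> forall bp, In bp bps -> forall j,
    snd bp (Nat.iter j a x) <> x0 /\ U (secA (fst bp) (snd bp (Nat.iter j a x))).
Proof.
  intros HM HMa. induction bps as [|[b p] bps IH]; intros Hbps; [exists []; intros ? ? ? []|].
  destruct IH as [R HR]; [intros; apply Hbps; now right|].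
  destruct (Hbps (b, p) (or_introl eq_refl)) as [Hb Hp].
  destruct (HU_B b Hb) as [L HL]. destruct (A_inverse p Hp) as (pi&_&Hpi&_).
  exists (flat_map (fun y => map (fun i => Nat.iter i a (pi y)) (seq 0 (S M))) L ++ R).
  intros x Hx bp [<-|Hbp] j.
  - apply HL, (orbit_avoids a p pi M); auto. intros Hin. apply Hx, in_or_app. now left.
  - apply HR; auto. intros Hin. apply Hx, in_or_app. now right.
Qed.

Section Word.
Variable w : list letter.
Hypothesis Hw : word_ok w.

Let a := word_root w.
Let section_pow x l := word_section (word_pow w l) x.

Definition section_period (x : X) (N : nat) : Prop :=
  forall l, orbit_length a x l -> forall c v, Nat.iter (c * N) (eval_word (section_pow x l)) v = v.

Lemma section_period_mul x N m : section_period x N -> section_period x (m * N).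
Proof. intros HN l Hl c v. rewrite Nat.mul_assoc. now apply HN. Qed.

Lemma section_period_off_finite M : 0 < M -> (forall t, Nat.iter M a t = t) ->
  exists R, forall x, ~ In x R -> section_period x e.
Proof.
  intros HM HMa.
  destruct (sections_in_U_off_finite a M (B_letters w) HM HMa) as [R HR].
  { intros bp Hbp. destruct (B_letters_ok w Hw bp Hbp). split; auto. now apply letter_ok_B. }
  exists R. intros x Hx l Hl c v.
  assert (Hletters : Forall (fun l => exists u, l = LA u /\ U u) (section_pow x l)).
  { unfold section_pow. rewrite word_section_pow. apply Forall_flat_map, Forall_forall.
    intros j _. rewrite word_section_B_letters. apply Forall_flat_map, Forall_forall.
    intros bp Hbp. destruct (HR x Hx bp Hbp j) as [Hneq HU].
    unfold directed_section. destruct (eqX _ x0); [contradiction|]. repeat constructor. eauto. }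
  destruct (eval_word_rooted U _ HU_id HU_mul Hletters) as [-> HUroot].
  rewrite iter_rooted. destruct v; simpl; f_equal.
  now apply iter_mul_fixed, HU_exp.
Qed.

Lemma finite_order_of_sections :
  (forall x l, orbit_length a x l -> has_finite_order (eval_word (section_pow x l))) ->
  has_finite_order (eval_word w).
Proof.
  intros Hsec. destruct (HAper a (word_root_in_A w Hw)) as (M&HM&HMa).
  destruct (section_period_off_finite M HM HMa) as [R HR].
  destruct (common_multiple _ section_period R) as (N&HN&HNR).
  { intros x N m. apply section_period_mul. }
  { intros x _. destruct (orbit_length_divides a x M HM (HMa x)) as (l&Hl&_).
    destruct (Hsec x l Hl) as (N&HN&HNx). exists N. split; auto.
    intros l' Hl' c v. rewrite <- (orbit_length_unique _ _ _ _ Hl Hl').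
    now apply iter_mul_fixed. }
  assert (Hall : forall x, section_period x (N * e)).
  { intros x. destruct (classic (In x R)) as [Hin|Hout].
    - rewrite Nat.mul_comm. now apply section_period_mul, HNR.
    - now apply section_period_mul, HR. }
  exists (M * (N * e)). split; [nia|]. intros [|x v].
  - rewrite <- eval_word_pow. apply eval_word_nil, word_ok_pow, Hw.
  - rewrite <- eval_word_pow, eval_word_cons by now apply word_ok_pow.
    rewrite word_root_pow, (Nat.mul_comm M), iter_mul_fixed by apply HMa. f_equal.
    destruct (orbit_length_divides a x M HM (HMa x)) as (l&Hl&q&Eq).
    replace ((N * e) * M) with (l * (q * (N * e))) by (rewrite Eq; nia).
    rewrite word_section_pow_mul by apply Hl.
    rewrite eval_word_pow. now apply (Hall x l).
Qed.

End Word.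

Lemma word_finite_order_bounded k : forall t w, word_ok w -> count_B w <= k ->
  trivial_after t (word_root w) -> has_finite_order (eval_word w).
Proof.
  induction k as [k IHk] using (well_founded_induction lt_wf).
  assert (Hfewer : forall w, word_ok w -> count_B w < k -> has_finite_order (eval_word w)).
  { intros w Hw Hlt. destruct (trivial_after_exists _ Hev (word_root_in_A w Hw)) as [t Ht].
    now apply (IHk (count_B w) Hlt t). }
  intros t; induction t as [|t IHt]; intros w Hw Hk Ht;
    apply finite_order_of_sections; auto; intros x l Hl;
    assert (Hh : word_ok (word_section (word_pow w l) x))
      by (apply word_ok_section, word_ok_pow, Hw);
    destruct (count_B_section_pow_cases w x l Hw Hl) as [Hlt|[Heq Hhit]].
  - apply Hfewer; auto; lia.
  - apply B_finite_order, section_directed; auto. now apply trivial_after_0.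
  - apply Hfewer; auto; lia.
  - apply IHt; auto; [lia|]. apply (trivial_after_sigma t (word_root w) x); auto.
    now apply sigma_of_section.
Qed.

Lemma CS_group_periodic : periodic (CS_group A B).
Proof.
  intros g Hg. destruct (word_of_CS_group g Hg) as (w&_&Hw&_&<-&_).
  destruct (trivial_after_exists _ Hev (word_root_in_A w Hw)) as [t Ht].
  now apply (word_finite_order_bounded (count_B w) t w).
Qed.

End Periodicity.

Lemma sections_in_A b : B b -> exists L, forall y, ~ In y L -> y <> x0 /\ A (secA b y).
Proof.
  intros Hb. exists [x0]. intros y Hy.
  assert (y <> x0) by (intros ->; apply Hy; now left). split; auto. now apply B_secA.
Qed.

Lemma finite_support_sections : finite_support B ->
  forall b, B b -> exists L, forall y, ~ In y L -> y <> x0 /\ forall t, secA b y t = t.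
Proof.
  intros Hsup b Hb. destruct (Hsup b Hb) as [F HF]. exists (x0 :: F). intros y Hy.
  split; [intros ->; apply Hy; now left|]. intros t.
  unfold secA. rewrite B_cons, HF; auto. intros Hin. apply Hy. now right.
Qed.

End ConstantSpinal.

Theorem theoremB (X : Type) (x0 : X) (A : (X -> X) -> Prop)
  (B : (list X -> list X) -> Prop) (S : (list X -> list X) -> Prop) :
  is_CS x0 A B ->
  periodic A ->
  (finite_exponent A \/ finite_support B) ->
  generates S B ->
  eventually_trivial x0 A S ->
  periodic (CS_group A B).
Proof.
  intros HCS HAper [(e&He&HeA)|Hsup] HS Hev.
  - apply (CS_group_periodic X x0 A B S HCS HS HAper Hev A e He); auto.
    + apply (A_id X x0 A B HCS).
    + apply (A_mul X x0 A B HCS).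
    + apply (sections_in_A X x0 A B HCS).
  - apply (CS_group_periodic X x0 A B S HCS HS HAper Hev (fun u => forall t, u t = t) 1);
      simpl; auto.
    + intros g g' Hg Hg' t. now rewrite Hg, Hg'.
    + apply (finite_support_sections X x0 A B HCS Hsup).
Qed.
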